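(* Let $\mathfrak p=(p_1,p_2,p_3,p_4)$ be a quadruple of distinct points in $\partial\mathbf H^2_{\mathbb C}$, and let $$\mathbb X_1=\mathbb X(p_1,p_2,p_3,p_4),\qquad \mathbb X_2=\mathbb X(p_1,p_3,p_2,p_4),\qquad \mathbb X_3=\mathbb X(p_2,p_3,p_1,p_4)$$ be its Korányi–Reimann complex cross-ratios. Then $$|\mathbb X_1|^{1/2}+|\mathbb X_2|^{1/2}\ge 1\qquad\text{and}\qquad -1\le |\mathbb X_1|^{1/2}-|\mathbb X_2|^{1/2}\le 1.$$ Moreover, equality holds in one of these three inequalities if and only if all four points of $\mathfrak p$ lie on a common $\mathbb R$-circle. In that case $\mathbb X_1>0$ and $\mathbb X_2>0$ (positive reals), and, writing $\mathbb X_i^{1/2}$ for the positive square root: (1) $\mathbb X_1^{1/2}-\mathbb X_2^{1/2}=1$ if $p_1$ and $p_3$ separate $p_2$ and $p_4$ on that $\mathbb R$-circle; (2) $\mathbb X_2^{1/2}-\mathbb X_1^{1/2}=1$ if $p_1$ and $p_2$ separate $p_3$ and $p_4$; (3) $\mathbb X_1^{1/2}+\mathbb X_2^{1/2}=1$ if $p_1$ and $p_4$ separate $p_2$ and $p_3$.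
   Context: Let $\mathbb C^{2,1}$ denote $\mathbb C^3$ with the Hermitian form of signature $(2,1)$: $\langle \mathbf z,\mathbf w\rangle=z_1\overline{w_3}+z_2\overline{w_2}+z_3\overline{w_1}$. Let $V_0=\{\mathbf z\in\mathbb C^{2,1}\setminus\{0\}:\langle\mathbf z,\mathbf z\rangle=0\}$ and $V_-=\{\mathbf z:\langle\mathbf z,\mathbf z\rangle<0\}$, and let $\mathbb P:\mathbb C^{2,1}\setminus\{0\}\to\mathbb CP^2$ be the projectivization. Complex hyperbolic space is $\mathbf H^2_{\mathbb C}=\mathbb P(V_-)$ and its boundary is $\partial\mathbf H^2_{\mathbb C}=\mathbb P(V_0)$ (a 3-sphere). A lift of $p\in\partial\mathbf H^2_{\mathbb C}$ is any $\mathbf p\in V_0$ with $\mathbb P(\mathbf p)=p$. For distinct $p_1,\dots,p_4\in\partial\mathbf H^2_{\mathbb C}$ with lifts $\mathbf p_i$, the Korányi–Reimann complex cross-ratio is $$\mathbb X(p_1,p_2,p_3,p_4)=\frac{\langle\mathbf p_3,\mathbf p_1\rangle\langle\mathbf p_4,\mathbf p_2\rangle}{\langle\mathbf p_4,\mathbf p_1\rangle\langle\mathbf p_3,\mathbf p_2\rangle},$$ which is independent of the choice of lifts (distinct boundary points have nonzero pairing). The holomorphic isometry group of $\mathbf H^2_{\mathbb C}$ is $\mathrm{PU}(2,1)$, the projectivized group of linear maps preserving $\langle\cdot,\cdot\rangle$. An $\mathbb R$-circle is the boundary in $\partial\mathbf H^2_{\mathbb C}$ of a Lagrangian plane (an isometric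 image of real hyperbolic plane $\mathbf H^2_{\mathbb R}$ in $\mathbf H^2_{\mathbb C}$); equivalently, it is an image under $\mathrm{PU}(2,1)$ of the standard $\mathbb R$-circle $\mathbb P(V_0\cap\mathbb R^3)$. An $\mathbb R$-circle is a topological circle; for four distinct points on it, ''$p_a$ and $p_b$ separate $p_c$ and $p_d$'' means $p_c$ and $p_d$ lie in different components of the circle with $p_a,p_b$ removed. *)

From mathcomp Require Import all_boot all_order all_algebra.
From mathcomp Require Import complex.
From mathcomp Require Import all_classical all_reals all_analysis.
Import GRing.Theory Num.Theory numFieldNormedType.Exports.

Set Implicit Arguments.
Unset Strict Implicit.
Unset Printing Implicit Defensive.

Local Open Scope ring_scope.
Local Open Scope classical_set_scope.

Section ComplexHyperbolic.
Variable R : realType.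

(* vectors of C^{2,1} as column vectors; coordinates z_1,z_2,z_3 are z 0 0, z 1 0, z 2 0 *)
Definition hform (z w : 'cV[R[i]]_3) : R[i] :=
  z 0 0 * (w 2%:R 0)^* + z 1%:R 0 * (w 1%:R 0)^* + z 2%:R 0 * (w 0 0)^*.

(* z is a lift of a boundary point: z in V_0 (nonzero null vector) *)
Definition boundary_lift (z : 'cV[R[i]]_3) : Prop :=
  z != 0 /\ hform z z = 0.

Definition same_point (z w : 'cV[R[i]]_3) : Prop :=
  exists l : R[i], z = l *: w.

Definition KRX (p1 p2 p3 p4 : 'cV[R[i]]_3) : R[i] :=
  (hform p3 p1 * hform p4 p2) / (hform p4 p1 * hform p3 p2).

Definition isU21 (g : 'M[R[i]]_3) : Prop :=
  forall z w : 'cV[R[i]]_3, hform (g *m z) (g *m w) = hform z w.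

Definition rC (x : R) : R[i] := Complex x 0.

(* z is a lift (in V_0 cap R^3) of a point of the standard R-circle P(V_0 cap R^3) *)
Definition std_Rcircle_lift (z : 'cV[R[i]]_3) : Prop :=
  (exists x : 'cV[R]_3, z = map_mx rC x) /\ boundary_lift z.

Definition on_common_Rcircle (p1 p2 p3 p4 : 'cV[R[i]]_3) : Prop :=
  exists g : 'M[R[i]]_3, isU21 g /\
    forall p, p \in [:: p1; p2; p3; p4] ->
      exists x, std_Rcircle_lift x /\ same_point p (g *m x).

Definition S1 : set (R * R) := [set s | s.1 ^+ 2 + s.2 ^+ 2 = 1].

(* homeomorphic parametrisation S^1 -> standard R-circle:
   (u,v) |-> P(1+u, v, -(1-u)/2)   (a real null vector, nonzero on S^1) *)
Definition std_param (s : R * R) : 'cV[R[i]]_3 :=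
  map_mx rC (\col_(i < 3) [:: 1 + s.1; s.2; - (1 - s.1) / 2]`_i).

Definition separates (a b c d : R * R) : Prop :=
  ~ connected_component (S1 `\` [set a; b]) c d.

End ComplexHyperbolic.

(* Lifts of four boundary points live in C^3, so the Gram
   determinant of  p1, ..., p4  vanishes.  For null vectors its expansion reads
     A^2 + B^2 + D^2 = 2 Re (c1 + c2 + c3),
   where  A = |a12||a34|,  B = |a13||a24|,  D = |a14||a23|  (a_ij = <p_i, p_j>)
   and the  c_i  are products of the a_ij with  |c1| = AD,  |c2| = BD,
   |c3| = AB.  Hence  A^2 + B^2 + D^2 <= 2 (AB + BD + DA),  a Ptolemy
   inequality which, since  |X1| = B/D  and  |X2| = A/D,  factors into the
   three stated inequalities.  Equality forces the  c_i  to be positive reals;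
   then the triple products  a12 a23 conj a13, ...  are real, and the four
   points have real coordinates in a suitable null frame, i.e. lie on an
   R-circle.  Conversely, on the standard R-circle in the stereographic
   coordinate  t  from  p1  the form is  -2 (t - t')^2 / ((1 + t^2)(1 + t'^2)),
   so  X1, X2  are squares of real cross-ratios of  t2, t3, t4;  which of them
   lies between the other two decides both which relation holds and which
   pair separates. *)

From mathcomp Require Import all_boot all_order all_algebra.
From mathcomp Require Import complex.
From mathcomp Require Import all_classical all_reals all_analysis.
From mathcomp Require Import ring lra.
Import GRing.Theory Num.Theory numFieldNormedType.Exports Order.TTheory.
Local Open Scope ring_scope.

Set Implicit Arguments.
Unset Strict Implicit.
Unset Printing Implicit Defensive.

Section RealComplex.
Variable R : realType.
Local Notation C := R[i].

Lemma rCE (x : R) : rC x = real_complex R x. Proof. by []. Qed.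
Lemma rCD (x y : R) : rC (x + y) = rC x + rC y. Proof. by rewrite !rCE rmorphD. Qed.
Lemma rCN (x : R) : rC (- x) = - rC x. Proof. by rewrite !rCE rmorphN. Qed.
Lemma rCB (x y : R) : rC (x - y) = rC x - rC y. Proof. by rewrite !rCE rmorphB. Qed.
Lemma rCM (x y : R) : rC (x * y) = rC x * rC y. Proof. by rewrite !rCE rmorphM. Qed.
Lemma rCV (x : R) : rC x^-1 = (rC x)^-1. Proof. by rewrite !rCE fmorphV. Qed.
Lemma rCX (x : R) n : rC (x ^+ n) = rC x ^+ n. Proof. by rewrite !rCE rmorphXn. Qed.
Lemma rC0 : rC 0 = 0 :> C. Proof. by rewrite !rCE rmorph0. Qed.
Lemma rC1 : rC 1 = 1 :> C. Proof. by rewrite !rCE rmorph1. Qed.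
Lemma rC_inj : injective (@rC R). Proof. by move=> x y []. Qed.
Lemma rC_eq0 (x : R) : (rC x == 0) = (x == 0).
Proof. by rewrite -rC0 (inj_eq rC_inj). Qed.
Lemma rC_conj (x : R) : (rC x)^* = rC x. Proof. exact: conjc_real. Qed.
Lemma rC_le (x y : R) : (rC x <= rC y) = (x <= y). Proof. exact: lecR. Qed.
Lemma rC_lt (x y : R) : (rC x < rC y) = (x < y). Proof. exact: ltcR. Qed.

Definition cmod (z : C) : R := complex.Re `|z|.

Lemma normr_cmod (z : C) : `|z| = rC (cmod z).
Proof. by rewrite /cmod normc_def. Qed.

Lemma cmod_ge0 (z : C) : 0 <= cmod z.
Proof. by rewrite -rC_le -normr_cmod rC0. Qed.

Lemma cmod_eq0 (z : C) : (cmod z == 0) = (z == 0).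
Proof. by rewrite -rC_eq0 -normr_cmod normr_eq0. Qed.

Lemma cmod_gt0 (z : C) : z != 0 -> 0 < cmod z.
Proof. by move=> z0; rewrite lt0r cmod_ge0 cmod_eq0 z0. Qed.

Lemma cmod_sqr_gt0 (z : C) : z != 0 -> 0 < cmod z ^+ 2.
Proof. by move=> z0; rewrite exprn_gt0 ?cmod_gt0. Qed.

Lemma cmodM (z w : C) : cmod (z * w) = cmod z * cmod w.
Proof. by apply: rC_inj; rewrite rCM -!normr_cmod normrM. Qed.

Lemma cmodV (z : C) : cmod z^-1 = (cmod z)^-1.
Proof. by apply: rC_inj; rewrite rCV -!normr_cmod normfV. Qed.

Lemma cmod_conj (z : C) : cmod z^* = cmod z.
Proof. by apply: rC_inj; rewrite -!normr_cmod normcJ. Qed.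

Lemma cmod_sqr (z : C) : cmod z ^+ 2 = complex.Re z ^+ 2 + complex.Im z ^+ 2.
Proof. by apply: rC_inj; rewrite rCX -normr_cmod -add_Re2_Im2. Qed.

Lemma Re_le_cmod (z : C) : complex.Re z <= cmod z.
Proof. have := cmod_sqr z; have := cmod_ge0 z; nra. Qed.

Lemma Re_eq_cmod (z : C) : complex.Re z = cmod z -> z = rC (cmod z).
Proof.
move=> E; have H := cmod_sqr z; rewrite -E in H *.
have Im0 : complex.Im z = 0 by nra.
by case: z {E H} Im0 => a b /= ->.
Qed.

Lemma mul_conjC (z : C) : z * z^* = rC (cmod z ^+ 2).
Proof. by rewrite -sqr_normc normr_cmod rCX. Qed.

Lemma divC_rC (z a : C) (x : R) : z * a^* = rC x -> z / a = rC (x / cmod a ^+ 2).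
Proof.
have [-> _|a0 zx] := eqVneq a 0.
  have /eqP -> : cmod 0 == 0 by rewrite cmod_eq0.
  by rewrite invr0 mulr0 expr0n /= invr0 mulr0 rC0.
by rewrite rCM rCV -mul_conjC -zx; field; rewrite conjC_eq0 a0.
Qed.

Lemma add_conjC (z : C) : z + z^* = rC (2 * complex.Re z).
Proof. by rewrite addcJ rCM [rC 2]rCE rmorph_nat. Qed.

Lemma sqrtC_rC (x : R) : 0 <= x -> sqrtC (rC x) = rC (Num.sqrt x).
Proof.
move=> x0; apply/eqP; rewrite -(eqrXn2 (_ : 0 < 2)%N) ?sqrtC_ge0 ?rC_le ?sqrtr_ge0 //.
by rewrite sqrtCK -rCX sqr_sqrtr.
Qed.

Lemma sqrtC_rC_sqr (x : R) : sqrtC (rC (x ^+ 2)) = rC `|x|.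
Proof. by rewrite sqrtC_rC ?sqr_ge0 // sqrtr_sqr. Qed.

Lemma real_of_sqr_rC_gt0 (z : C) (x : R) : 0 < x -> z ^+ 2 = rC x ->
  z = rC (complex.Re z) /\ complex.Re z != 0.
Proof.
case: z => a b /= x0; rewrite expr2 /= /rC => -[h1 h2].
have /eqP : a * b = 0 by lra.
rewrite mulf_eq0 => /orP[/eqP a0|/eqP b0]; subst; first by exfalso; nra.
by split => //; apply/eqP => a0; subst a; lra.
Qed.

End RealComplex.

Section HermitianForm.
Variable R : realType.
Local Notation C := R[i].
Local Notation V := 'cV[R[i]]_3.

Lemma hformC (z w : V) : hform w z = (hform z w)^*.
Proof. rewrite /hform !rmorphD !rmorphM /= !conjCK; ring. Qed.
Lemma hformDl (z z' w : V) : hform (z + z') w = hform z w + hform z' w.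
Proof. rewrite /hform !mxE; ring. Qed.
Lemma hformDr (z w w' : V) : hform z (w + w') = hform z w + hform z w'.
Proof. rewrite /hform !mxE !rmorphD; ring. Qed.
Lemma hformZl a (z w : V) : hform (a *: z) w = a * hform z w.
Proof. rewrite /hform !mxE; ring. Qed.
Lemma hformZr a (z w : V) : hform z (a *: w) = a^* * hform z w.
Proof. rewrite /hform !mxE !rmorphM; ring. Qed.
Lemma hformNl (z w : V) : hform (- z) w = - hform z w.
Proof. by rewrite -scaleN1r hformZl mulN1r. Qed.
Lemma hformNr (z w : V) : hform z (- w) = - hform z w.
Proof. by rewrite -scaleN1r hformZr rmorphN1 mulN1r. Qed.
Lemma hformBl (z z' w : V) : hform (z - z') w = hform z w - hform z' w.
Proof. by rewrite hformDl hformNl. Qed.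
Lemma hformBr (z w w' : V) : hform z (w - w') = hform z w - hform z w'.
Proof. by rewrite hformDr hformNr. Qed.

Lemma hform0l (w : V) : hform 0 w = 0.
Proof. by rewrite -(scale0r 0) hformZl mul0r. Qed.

Lemma hform_scale_pairing (p q : V) :
  hform (hform q p *: p) q = rC (cmod (hform q p) ^+ 2).
Proof. by rewrite hformZl -mul_conjC (hformC q p). Qed.

Lemma null_boundary_lift (p q : V) : hform p p = 0 -> hform p q != 0 -> boundary_lift p.
Proof. by move=> pp pq; split => //; apply: contraNneq pq => ->; rewrite hform0l. Qed.

Lemma cmod_hformC (z w : V) : cmod (hform w z) = cmod (hform z w).
Proof. by rewrite hformC cmod_conj. Qed.

Lemma col3P (z w : V) :
  z 0 0 = w 0 0 -> z 1%:R 0 = w 1%:R 0 -> z 2%:R 0 = w 2%:R 0 -> z = w.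
Proof.
move=> h0 h1 h2; apply/matrixP => i j; rewrite (ord1 j).
case: i => [[|[|[|//]]] Hi].
- by have -> : Ordinal Hi = 0 by apply: val_inj.
- by have -> : Ordinal Hi = 1%:R by apply: val_inj.
- by have -> : Ordinal Hi = 2%:R by apply: val_inj.
Qed.

(* The Gram matrix of four vectors of C^3 is singular; its determinant,
   expanded by the Leibniz formula. *)
Lemma hform_gram4_det (x1 x2 x3 x4 y1 y2 y3 y4 : V) :
  let a11 := hform x1 y1 in let a12 := hform x1 y2 in
  let a13 := hform x1 y3 in let a14 := hform x1 y4 in
  let a21 := hform x2 y1 in let a22 := hform x2 y2 in
  let a23 := hform x2 y3 in let a24 := hform x2 y4 in
  let a31 := hform x3 y1 in let a32 := hform x3 y2 in
  let a33 := hform x3 y3 in let a34 := hform x3 y4 in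
  let a41 := hform x4 y1 in let a42 := hform x4 y2 in
  let a43 := hform x4 y3 in let a44 := hform x4 y4 in
  a11*a22*a33*a44 - a11*a22*a34*a43 - a11*a23*a32*a44 + a11*a23*a34*a42
  + a11*a24*a32*a43 - a11*a24*a33*a42 - a12*a21*a33*a44 + a12*a21*a34*a43
  + a12*a23*a31*a44 - a12*a23*a34*a41 - a12*a24*a31*a43 + a12*a24*a33*a41
  + a13*a21*a32*a44 - a13*a21*a34*a42 - a13*a22*a31*a44 + a13*a22*a34*a41
  + a13*a24*a31*a42 - a13*a24*a32*a41 - a14*a21*a32*a43 + a14*a21*a33*a42
  + a14*a22*a31*a43 - a14*a22*a33*a41 - a14*a23*a31*a42 + a14*a23*a32*a41 = 0.
Proof. rewrite /hform; cbv beta zeta; ring. Qed.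

Definition det3c (x y z : V) : C :=
  x 0 0 * y 1%:R 0 * z 2%:R 0 - x 0 0 * y 2%:R 0 * z 1%:R 0
  - x 1%:R 0 * y 0 0 * z 2%:R 0 + x 1%:R 0 * y 2%:R 0 * z 0 0
  + x 2%:R 0 * y 0 0 * z 1%:R 0 - x 2%:R 0 * y 1%:R 0 * z 0 0.

(* The form has signature (2,1): Gram determinants of triples are <= 0. *)
Lemma hform_gram3_det (x1 x2 x3 : V) :
  let a11 := hform x1 x1 in let a12 := hform x1 x2 in let a13 := hform x1 x3 in
  let a21 := hform x2 x1 in let a22 := hform x2 x2 in let a23 := hform x2 x3 in
  let a31 := hform x3 x1 in let a32 := hform x3 x2 in let a33 := hform x3 x3 in
  a11*a22*a33 - a11*a23*a32 - a12*a21*a33 + a12*a23*a31 + a13*a21*a32 - a13*a22*a31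
  = - (det3c x1 x2 x3 * (det3c x1 x2 x3)^*).
Proof.
rewrite /hform /det3c; cbv beta zeta.
rewrite !rmorphD !rmorphN !rmorphM; ring.
Qed.

(* The form is positive definite on the hyperplane  z_1 = z_3. *)
Lemma hform_anisotropic (z : V) : z 0 0 = z 2%:R 0 -> hform z z = 0 -> z = 0.
Proof.
rewrite /hform => E; rewrite -E !mul_conjC -!rCD -rC0 => /rC_inj H.
have /eqP : cmod (z 0 0) = 0.
  by have := cmod_ge0 (z 0 0); have := cmod_ge0 (z 1%:R 0); nra.
have /eqP : cmod (z 1%:R 0) = 0.
  by have := cmod_ge0 (z 0 0); have := cmod_ge0 (z 1%:R 0); nra.
rewrite !cmod_eq0 => /eqP z1 /eqP z0.
by apply: col3P; rewrite !mxE // -E.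
Qed.

Lemma null_orthogonal_same_point (p q : V) : boundary_lift p -> boundary_lift q ->
  hform p q = 0 -> same_point p q.
Proof.
move=> [pn0 pp] [qn0 qq] pq.
have qp : hform q p = 0 by rewrite hformC pq conjC0.
pose s := q 0 0 - q 2%:R 0; pose t := p 2%:R 0 - p 0 0.
have st0 : s *: p + t *: q = 0.
  apply: hform_anisotropic; first by rewrite !mxE /s /t; ring.
  by rewrite !(hformDl, hformDr, hformZl, hformZr) pp pq qp qq; ring.
have [s0|s0] := eqVneq s 0.
  move: st0; rewrite s0 scale0r add0r => /eqP.
  rewrite scaler_eq0 (negPf qn0) orbF => /eqP t0.
  case/negP: pn0; apply/eqP/hform_anisotropic => //.
  by apply/eqP; rewrite eq_sym -subr_eq0 -/t t0.
exists (- t / s); apply: (@scalerI _ _ s) => //.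
by rewrite scalerA mulrC divfK // scaleNr; apply/eqP; rewrite -addr_eq0 st0.
Qed.

Lemma hform_distinct_neq0 (p q : V) : boundary_lift p -> boundary_lift q ->
  ~ same_point p q -> hform p q != 0.
Proof. by move=> bp bq npq; apply/eqP => /(null_orthogonal_same_point bp bq). Qed.

End HermitianForm.

(* With  B = x^2 D  and  A = y^2 D  the Ptolemy defect factors as
   D^2 ((x + y)^2 - 1) (1 - (x - y)^2). *)
Lemma ptolemy_sqrt_bounds (R : realFieldType) (A B D x y : R) :
  0 < D -> 0 <= x -> 0 <= y -> B = x ^+ 2 * D -> A = y ^+ 2 * D ->
  A ^+ 2 + B ^+ 2 + D ^+ 2 <= 2 * (A * B + B * D + D * A) ->
  [/\ 1 <= x + y, -1 <= x - y <= 1 &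
    ((x + y = 1 \/ x - y = -1 \/ x - y = 1) <->
      A ^+ 2 + B ^+ 2 + D ^+ 2 = 2 * (A * B + B * D + D * A))].
Proof.
move=> D0 x0 y0 hx hy H.
have E : 2 * (A * B + B * D + D * A) - (A ^+ 2 + B ^+ 2 + D ^+ 2) =
   - D ^+ 2 * (((x + y) ^+ 2 - 1) * ((x - y) ^+ 2 - 1)) by rewrite hx hy; ring.
have P : ((x + y) ^+ 2 - 1) * ((x - y) ^+ 2 - 1) <= 0.
  have : 0 <= - D ^+ 2 * (((x + y) ^+ 2 - 1) * ((x - y) ^+ 2 - 1)).
    by rewrite -E subr_ge0.
  have : 0 < D ^+ 2 by apply: exprn_gt0.
  nra.
have xy1 : 1 <= x + y.
  rewrite leNgt; apply/negP => h.
  have h1 : (x + y) ^+ 2 < 1 by nra.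
  have h2 : (x - y) ^+ 2 < 1 by nra.
  nra.
have xy2 : (x - y) ^+ 2 <= 1.
  rewrite leNgt; apply/negP => h.
  have h1 : 1 < (x + y) ^+ 2 by nra.
  nra.
split => //; first by apply/andP; split; nra.
split.
  move=> h; apply/eqP; rewrite eq_sym -subr_eq0 E.
  by case: h => [h|[h|h]]; rewrite h; apply/eqP; ring.
move=> h.
have /eqP : ((x + y) ^+ 2 - 1) * ((x - y) ^+ 2 - 1) = 0.
  have /eqP : - D ^+ 2 * (((x + y) ^+ 2 - 1) * ((x - y) ^+ 2 - 1)) = 0.
    by rewrite -E h subrr.
  by rewrite mulf_eq0 oppr_eq0 expf_eq0 /= (gt_eqF D0) => /eqP.
rewrite mulf_eq0 => /orP[] /eqP h'; first by left; nra.
have /eqP : (x - y - 1) * (x - y + 1) = 0 by rewrite -h'; ring.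
by rewrite mulf_eq0 => /orP[] /eqP ?; right; [right|left]; lra.
Qed.

Section NullFrame.
Variable R : realType.
Local Notation C := R[i].
Local Notation V := 'cV[R[i]]_3.

(* A basis whose Gram matrix is the matrix of  hform  in the standard basis. *)
Definition null_frame (u0 u1 u2 : V) : Prop :=
  [/\ hform u0 u0 = 0, hform u1 u1 = 1, hform u2 u2 = 0,
      hform u0 u1 = 0 & hform u0 u2 = 1 /\ hform u1 u2 = 0].

Definition frame_matrix (u0 u1 u2 : V) : 'M[C]_3 :=
  \matrix_(i < 3, j < 3)
    (if j == 0 then u0 i 0 else if j == 1%:R then u1 i 0 else u2 i 0).

Variables u0 u1 u2 : V.
Hypothesis frame : null_frame u0 u1 u2.

Lemma null_frame_sym : [/\ hform u1 u0 = 0, hform u2 u0 = 1 & hform u2 u1 = 0].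
Proof.
case: frame => _ _ _ h01 [h02 h12].
by rewrite hformC h01 conjC0 hformC h02 conjC1 hformC h12 conjC0.
Qed.

Lemma null_frame_hform (z0 z1 z2 w0 w1 w2 : C) :
  hform (z0 *: u0 + z1 *: u1 + z2 *: u2) (w0 *: u0 + w1 *: u1 + w2 *: u2)
  = z0 * w2^* + z1 * w1^* + z2 * w0^*.
Proof.
case: frame => h00 h11 h22 h01 [h02 h12]; case: null_frame_sym => h10 h20 h21.
rewrite !(hformDl, hformDr, hformZl, hformZr).
by rewrite h00 h11 h22 h01 h02 h12 h10 h20 h21; ring.
Qed.

Lemma frame_matrix_mul (x : V) :
  frame_matrix u0 u1 u2 *m x = x 0 0 *: u0 + x 1%:R 0 *: u1 + x 2%:R 0 *: u2.
Proof.
apply/matrixP => i j; rewrite !mxE !big_ord_recr big_ord0 /= !mxE /= (ord1 j).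
rewrite (_ : widen_ord _ (widen_ord _ ord_max) = 0); last by apply: val_inj.
rewrite (_ : widen_ord _ ord_max = 1%:R); last by apply: val_inj.
rewrite (_ : ord_max = 2%:R :> 'I_3); last by apply: val_inj.
ring.
Qed.

Lemma null_frame_U21 : isU21 (frame_matrix u0 u1 u2).
Proof. by move=> z w; rewrite !frame_matrix_mul null_frame_hform. Qed.

(* Nondegeneracy: the determinant of the Gram matrix of  u0, u1, u2, w, e
   against  u0, u1, u2, e  vanishes, which forces  hform w e = 0  for all e. *)
Lemma null_frame_orthogonal_eq0 (w : V) :
  hform w u0 = 0 -> hform w u1 = 0 -> hform w u2 = 0 -> w = 0.
Proof.
case: frame => h00 h11 h22 h01 [h02 h12]; case: null_frame_sym => h10 h20 h21.
move=> w0 w1 w2.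
have we0 (e : V) : hform w e = 0.
  move: (hform_gram4_det u0 u1 u2 w u0 u1 u2 e) => /=.
  rewrite h00 h11 h22 h01 h02 h12 h10 h20 h21 w0 w1 w2 => H.
  by apply/eqP; rewrite -oppr_eq0; apply/eqP; rewrite -[RHS]H; ring.
pose e k : V := \col_(i < 3) (if i == k then 1 else 0).
have := we0 (e 0); have := we0 (e 1%:R); have := we0 (e 2%:R).
rewrite /hform /e !mxE /= !rmorph0 !rmorph1 !mulr0 !mulr1 !add0r !addr0.
by move=> k2 k1 k0; apply: col3P; rewrite !mxE.
Qed.

Lemma null_frame_expand (q : V) :
  q = hform q u2 *: u0 + hform q u1 *: u1 + hform q u0 *: u2.
Proof.
case: frame => h00 h11 h22 h01 [h02 h12]; case: null_frame_sym => h10 h20 h21.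
apply/eqP; rewrite -subr_eq0; apply/eqP/null_frame_orthogonal_eq0;
  by rewrite hformBl !(hformDl, hformZl) ?(h00, h11, h22, h01, h02, h12, h10, h20, h21); ring.
Qed.

Lemma null_frame_real_point (p : V) (l : C) (a b c : R) :
  boundary_lift p -> l != 0 -> hform (l *: p) u0 = rC c ->
  hform (l *: p) u1 = rC b -> hform (l *: p) u2 = rC a ->
  exists x, std_Rcircle_lift x /\ same_point p (frame_matrix u0 u1 u2 *m x).
Proof.
move=> [pn0 pp] l0 hc hb ha.
pose x := map_mx (@rC R) (\col_(i < 3) [:: a; b; c]`_i).
have gx : frame_matrix u0 u1 u2 *m x = l *: p.
  by rewrite frame_matrix_mul !mxE /= -ha -hb -hc -null_frame_expand.
exists x; split.
  split; first by exists (\col_(i < 3) [:: a; b; c]`_i).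
  split.
    apply: contra pn0 => /eqP x0; move: gx; rewrite x0 mulmx0 => /esym/eqP.
    by rewrite scaler_eq0 (negPf l0).
  by rewrite -null_frame_U21 gx hformZl hformZr pp !mulr0.
by exists l^-1; rewrite gx scalerA mulVf // scale1r.
Qed.

Lemma null_frame_pairing_real (q q' : V) (a b c a' c' t : R) :
  hform q u0 = rC c -> hform q u1 = rC b ->
  hform q u2 = rC a -> b != 0 ->
  hform q' u0 = rC c' -> hform q' u2 = rC a' -> hform q' q = rC t ->
  hform q' u1 = rC ((t - a * c' - c * a') / b).
Proof.
move=> hc hb ha b0 hc' ha' ht.
move: ht; rewrite (null_frame_expand q) hc hb ha.
rewrite !(hformDr, hformZr) !rC_conj hc' ha' => ht.
have rb0 : rC b != 0 by rewrite rC_eq0.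
rewrite rCM rCV !rCB !rCM -ht; field; exact: rb0.
Qed.

End NullFrame.

(* u1 := (q - al u0 - ga u2) / be,  where  be^2 = -2 al ga  is the squared
   norm of  q - al u0 - ga u2. *)
Lemma null_frame_completion (R : realType) (u0 u2 q : 'cV[R[i]]_3) (al ga : R) :
  hform u0 u0 = 0 -> hform u2 u2 = 0 -> hform u0 u2 = 1 -> hform q q = 0 ->
  hform q u0 = rC ga -> hform q u2 = rC al -> al * ga < 0 ->
  exists (u1 : 'cV[R[i]]_3) (be : R),
    [/\ null_frame u0 u1 u2, hform q u1 = rC be & be != 0].
Proof.
move=> h00 h22 h02 hqq hq0 hq2 alga.
pose be := Num.sqrt (- (2 * al * ga)).
have be0 : be != 0 by rewrite gt_eqF // sqrtr_gt0; lra.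
have hbe : be ^+ 2 = - (2 * al * ga) by rewrite sqr_sqrtr //; lra.
have h20 : hform u2 u0 = 1 by rewrite hformC h02 conjC1.
have h0q : hform u0 q = rC ga by rewrite hformC hq0 rC_conj.
have h2q : hform u2 q = rC al by rewrite hformC hq2 rC_conj.
have bn0 : rC be != 0 by rewrite rC_eq0.
have ib : (rC be)^-1^* = (rC be)^-1 by rewrite -rCV rC_conj.
pose u1 := (rC be)^-1 *: (q - rC al *: u0 - rC ga *: u2).
have hform_u1r (w : 'cV[R[i]]_3) : hform w u1 = (rC be)^-1 *
    (hform w q - rC al * hform w u0 - rC ga * hform w u2).
  by rewrite /u1 hformZr ib !hformBr !hformZr !rC_conj.
have hform_u1l (w : 'cV[R[i]]_3) : hform u1 w = (rC be)^-1 *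
    (hform q w - rC al * hform u0 w - rC ga * hform u2 w).
  by rewrite /u1 hformZl !hformBl !hformZl.
have be2 : rC be * rC be = - (2 * rC al * rC ga).
  by rewrite -rCM -expr2 hbe rCN !rCM rCE rmorph_nat.
exists u1, be; split => //.
- split => //.
  + rewrite hform_u1l !hform_u1r hqq hq0 hq2 h0q h2q h00 h22 h02 h20.
    apply: (mulIf bn0); apply: (mulIf bn0); rewrite mul1r be2; field; exact: bn0.
  + by rewrite hform_u1r h0q h00 h02; ring.
  + split => //; rewrite hform_u1l hq2 h02 h22; ring.
- rewrite hform_u1r hqq hq0 hq2; apply: (mulIf bn0).
  by rewrite be2; field; exact: bn0.
Qed.

Section NullQuadruple.
Variable R : realType.
Local Notation C := R[i].
Local Notation V := 'cV[R[i]]_3.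

Variables p1 p2 p3 p4 : V.
Hypotheses (null1 : hform p1 p1 = 0) (null2 : hform p2 p2 = 0)
  (null3 : hform p3 p3 = 0) (null4 : hform p4 p4 = 0).

Local Notation a12 := (hform p1 p2).
Local Notation a13 := (hform p1 p3).
Local Notation a14 := (hform p1 p4).
Local Notation a23 := (hform p2 p3).
Local Notation a24 := (hform p2 p4).
Local Notation a34 := (hform p3 p4).

Definition ptolemy_c1 := a12 * a23 * a34 * a14^*.
Definition ptolemy_c2 := a13 * a23^* * a24 * a14^*.
Definition ptolemy_c3 := a12 * a24 * a34^* * a13^*.
Local Notation c1 := ptolemy_c1.
Local Notation c2 := ptolemy_c2.
Local Notation c3 := ptolemy_c3.
Local Notation A := (cmod a12 * cmod a34).
Local Notation B := (cmod a13 * cmod a24).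
Local Notation D := (cmod a14 * cmod a23).

(* Expansion of the vanishing Gram determinant of  p1, p2, p3, p4. *)
Lemma null_gram4_identity :
  A ^+ 2 + B ^+ 2 + D ^+ 2 =
  2 * (complex.Re c1 + complex.Re c2 + complex.Re c3).
Proof.
move: (hform_gram4_det p1 p2 p3 p4 p1 p2 p3 p4) => /=.
rewrite null1 null2 null3 null4 (hformC p1 p2) (hformC p1 p3) (hformC p1 p4)
  (hformC p2 p3) (hformC p2 p4) (hformC p3 p4) => H.
have key : rC (A ^+ 2 + B ^+ 2 + D ^+ 2) =
    (c1 + c1^*) + (c2 + c2^*) + (c3 + c3^*).
  apply/eqP; rewrite -subr_eq0 -[X in _ == X]H !exprMn !rCD.
  rewrite (rCM (cmod a12 ^+ 2)) (rCM (cmod a13 ^+ 2)) (rCM (cmod a14 ^+ 2)) -!mul_conjC.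
  by rewrite /ptolemy_c1 /ptolemy_c2 /ptolemy_c3 !rmorphM /= !conjCK; apply/eqP; ring.
by apply: rC_inj; rewrite key !add_conjC -!rCD; congr rC; ring.
Qed.

Lemma cmod_ptolemy_c1 : cmod c1 = A * D.
Proof. by rewrite /ptolemy_c1 !cmodM cmod_conj; ring. Qed.
Lemma cmod_ptolemy_c2 : cmod c2 = B * D.
Proof. by rewrite /ptolemy_c2 !cmodM !cmod_conj; ring. Qed.
Lemma cmod_ptolemy_c3 : cmod c3 = A * B.
Proof. by rewrite /ptolemy_c3 !cmodM !cmod_conj; ring. Qed.

Lemma ptolemy_inequality :
  A ^+ 2 + B ^+ 2 + D ^+ 2 <= 2 * (A * B + B * D + D * A).
Proof.
have := Re_le_cmod c1; have := Re_le_cmod c2; have := Re_le_cmod c3.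
rewrite null_gram4_identity cmod_ptolemy_c1 cmod_ptolemy_c2 cmod_ptolemy_c3; lra.
Qed.

Lemma ptolemy_equality_real :
  A ^+ 2 + B ^+ 2 + D ^+ 2 = 2 * (A * B + B * D + D * A) ->
  [/\ c1 = rC (cmod c1), c2 = rC (cmod c2) & c3 = rC (cmod c3)].
Proof.
rewrite null_gram4_identity => E.
have r1 := Re_le_cmod c1; have r2 := Re_le_cmod c2; have r3 := Re_le_cmod c3.
rewrite cmod_ptolemy_c1 in r1; rewrite cmod_ptolemy_c2 in r2.
rewrite cmod_ptolemy_c3 in r3.
by split; apply: Re_eq_cmod;
  rewrite ?cmod_ptolemy_c1 ?cmod_ptolemy_c2 ?cmod_ptolemy_c3; lra.
Qed.

(* 2 Re (a12 a23 conj a13) is the Gram determinant of the null triple. *)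
Lemma null_triple_Re_le0 : complex.Re (a12 * a23 * a13^*) <= 0.
Proof.
move: (hform_gram3_det p1 p2 p3) => /=.
rewrite null1 null2 null3 (hformC p1 p2) (hformC p1 p3) (hformC p2 p3).
set T := a12 * a23 * a13^*.
have -> : 0 * 0 * 0 - 0 * a23 * a23^* - a12 * a12^* * 0 + T
    + a13 * a12^* * a23^* - a13 * 0 * a13^* = T + T^*.
  by rewrite /T !rmorphM /= !conjCK; ring.
rewrite add_conjC mul_conjC -rCN => /rC_inj.
by have := cmod_ge0 (det3c p1 p2 p3); nra.
Qed.

Hypotheses (n12 : a12 != 0) (n13 : a13 != 0) (n14 : a14 != 0)
  (n23 : a23 != 0) (n24 : a24 != 0) (n34 : a34 != 0).

(* [T134 = |a13|^2 c1 / T] and [T124 = |a12|^2 c2 / T^*], while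
   [T^2 |a14|^2 c3 = |a13|^2 |a12|^2 c1 c2]. *)
Lemma null_triple_products_real :
  c1 = rC (cmod c1) -> c2 = rC (cmod c2) -> c3 = rC (cmod c3) ->
  exists t t124 t134 : R, [/\ a12 * a23 * a13^* = rC t, t < 0,
     a12 * a24 * a14^* = rC t124 & a13 * a34 * a14^* = rC t134].
Proof.
move=> e1 e2 e3.
set T := a12 * a23 * a13^*; set T124 := a12 * a24 * a14^*.
set T134 := a13 * a34 * a14^*.
have P1 : T * T134 = rC (cmod a13 ^+ 2 * cmod c1).
  by rewrite rCM -mul_conjC -e1 /T /T134 /ptolemy_c1; ring.
have P2 : T^* * T124 = rC (cmod a12 ^+ 2 * cmod c2).
  by rewrite rCM -mul_conjC -e2 /T /T124 /ptolemy_c2 !rmorphM /= !conjCK; ring.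
have P3 : T124 * T134^* = rC (cmod a14 ^+ 2 * cmod c3).
  by rewrite rCM -mul_conjC -e3 /T134 /T124 /ptolemy_c3 !rmorphM /= !conjCK; ring.
have Nc1 : 0 < cmod c1 by rewrite cmod_gt0 // !mulf_neq0 // conjC_eq0.
have Nc2 : 0 < cmod c2 by rewrite cmod_gt0 // !mulf_neq0 // conjC_eq0.
have Nc3 : 0 < cmod c3 by rewrite cmod_gt0 // !mulf_neq0 // conjC_eq0.
have key : (T * T134) * (T^* * T124)^* = T ^+ 2 * (T124 * T134^*)^*.
  by rewrite /T /T124 /T134 !rmorphM /= !conjCK; ring.
rewrite P1 P2 P3 !rC_conj -rCM in key.
have nz : cmod a14 ^+ 2 * cmod c3 != 0 by rewrite mulf_neq0 // gt_eqF ?cmod_sqr_gt0.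
have T2 : T ^+ 2 = rC (cmod a13 ^+ 2 * cmod c1 * (cmod a12 ^+ 2 * cmod c2)
                       / (cmod a14 ^+ 2 * cmod c3)).
  by rewrite rCM key rCV mulfK // rC_eq0.
have [Tr Tn0] := real_of_sqr_rC_gt0 (divr_gt0 (mulr_gt0 (mulr_gt0 (cmod_sqr_gt0 n13) Nc1)
  (mulr_gt0 (cmod_sqr_gt0 n12) Nc2)) (mulr_gt0 (cmod_sqr_gt0 n14) Nc3)) T2.
set t := complex.Re T in Tr Tn0.
have T0 : T != 0 by rewrite Tr rC_eq0.
have Tc : T^* = T by rewrite Tr rC_conj.
exists t, (cmod a12 ^+ 2 * cmod c2 / t), (cmod a13 ^+ 2 * cmod c1 / t); split.
- exact: Tr.
- by rewrite lt_neqAle Tn0 null_triple_Re_le0.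
- by rewrite rCM rCV -P2 Tc -Tr mulrAC mulfV // mul1r.
- by rewrite rCM rCV -P1 -Tr mulrAC mulfV // mul1r.
Qed.

Local Notation u2 := ((a12^*)^-1 *: p2).

Lemma hform_scale_conjV (q : V) (x : R) : a12 * hform p2 q * (hform p1 q)^* = rC x ->
  hform (hform p1 q *: q) u2 = rC (x / cmod a12 ^+ 2).
Proof.
move=> Tx; rewrite hformZl hformZr fmorphV /= conjCK mulrA mulrAC; apply: divC_rC.
by rewrite (hformC p2 q) -rC_conj -Tx !rmorphM /= conjCK; ring.
Qed.

(* Rescaling  p2  so that  hform p1 p2 = 1, and completing  p1, p2  by the
   normalized component of  a13 p3  orthogonal to them. *)
Lemma null_triple_frame (t : R) : a12 * a23 * a13^* = rC t -> t < 0 ->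
  exists (u1 : V) (be : R),
    [/\ null_frame p1 u1 u2, hform (a13 *: p3) u1 = rC be & be != 0].
Proof.
move=> Tt tneg.
have h22 : hform u2 u2 = 0 by rewrite hformZl hformZr null2 !mulr0.
have h02 : hform p1 u2 = 1 by rewrite hformZr fmorphV /= conjCK mulVf.
have h33 : hform (a13 *: p3) (a13 *: p3) = 0 by rewrite hformZl hformZr null3 !mulr0.
apply: (null_frame_completion null1 h22 h02 h33 (hform_scale_pairing _ _)
  (hform_scale_conjV Tt)).
by rewrite pmulr_llt0 ?cmod_sqr_gt0 // pmulr_llt0 ?invr_gt0 ?cmod_sqr_gt0.
Qed.

(* In the frame of [null_triple_frame] all four points have real coordinates:
   the triple products make the pairings of  a14 p4  with  p1  and  u2  real,
   and its pairing with  a13 p3  then determines the third coordinate. *)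
Lemma null_quadruple_on_Rcircle :
  c1 = rC (cmod c1) -> c2 = rC (cmod c2) -> c3 = rC (cmod c3) ->
  on_common_Rcircle p1 p2 p3 p4.
Proof.
move=> e1 e2 e3.
have [t [t124 [t134 [Tt tneg T124 T134]]]] := null_triple_products_real e1 e2 e3.
have [u1 [be [frame hq31 be0]]] := null_triple_frame Tt tneg.
have hq43 : hform (a14 *: p4) (a13 *: p3) = rC t134.
  by rewrite hformZl hformZr (hformC p3 p4) -rC_conj -T134 !rmorphM /= conjCK; ring.
have hq41 := null_frame_pairing_real frame (hform_scale_pairing _ _) hq31
  (hform_scale_conjV Tt) be0 (hform_scale_pairing _ _) (hform_scale_conjV T124) hq43.
have [_ _ h22 h01 [h02 _]] := frame; have [_ h20 h21] := null_frame_sym frame.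
have n21 : hform p2 p1 != 0 by rewrite hformC conjC_eq0.
have n41 : hform p4 p1 != 0 by rewrite hformC conjC_eq0.
exists (frame_matrix p1 u1 u2); split; first exact: null_frame_U21.
move=> p; rewrite !inE => /or4P[] /eqP ->.
- apply: (@null_frame_real_point R p1 u1 u2 frame p1 1 1 0 0
    (null_boundary_lift null1 n12) (oner_neq0 _)); rewrite scale1r.
  + by rewrite null1 rC0.
  + by rewrite h01 rC0.
  + by rewrite h02 rC1.
- apply: (@null_frame_real_point R p1 u1 u2 frame p2 (a12^*)^-1 0 0 1
    (null_boundary_lift null2 n21)); first by rewrite invr_eq0 conjC_eq0.
  + by rewrite h20 rC1.
  + by rewrite h21 rC0.
  + by rewrite h22 rC0.
- exact: (null_frame_real_point frame (null_boundary_lift null3 n34) n13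
    (hform_scale_pairing _ _) hq31 (hform_scale_conjV Tt)).
- exact: (null_frame_real_point frame (null_boundary_lift null4 n41) n14
    (hform_scale_pairing _ _) hq41 (hform_scale_conjV T124)).
Qed.

End NullQuadruple.

Section StandardRcircle.
Variable R : realType.
Implicit Types (s w : R * R) (t : R).

Definition std_pairing s s' : R := s.1 * s'.1 + s.2 * s'.2 - 1.

Lemma hform_std_param s s' :
  hform (std_param s) (std_param s') = rC (std_pairing s s').
Proof.
rewrite /hform /std_param !mxE /= !rC_conj -!rCM -!rCD /std_pairing.
by congr rC; field.
Qed.

Lemma std_pairing_self s : S1 s -> std_pairing s s = 0.
Proof. by rewrite /S1 /std_pairing -!expr2 => ->; rewrite subrr. Qed.

(* Rotation of  w  by the angle of  s1  (complex multiplication). *)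
Definition rotate s1 w : R * R := (s1.1 * w.1 - s1.2 * w.2, s1.1 * w.2 + s1.2 * w.1).

Lemma S1_rotate s1 w : S1 s1 -> S1 w -> S1 (rotate s1 w).
Proof.
rewrite /S1 /rotate /= => h1 hw.
by rewrite -[1]mulr1 -{1}h1 -hw; ring.
Qed.

Lemma std_pairing_rotate s1 w w' : S1 s1 ->
  std_pairing (rotate s1 w) (rotate s1 w') = std_pairing w w'.
Proof.
rewrite /S1 /std_pairing /rotate /= => h1.
transitivity ((s1.1 ^+ 2 + s1.2 ^+ 2) * (w.1 * w'.1 + w.2 * w'.2) - 1); first ring.
by rewrite h1 mul1r.
Qed.

Lemma rotate1 s1 : rotate s1 (1, 0) = s1.
Proof. by case: s1 => a b; rewrite /rotate /=; congr pair; ring. Qed.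

Lemma tan_den_neq0 t : t ^+ 2 + 1 != 0.
Proof. by rewrite gt_eqF //; nra. Qed.

(* Inverse stereographic projection from  (1, 0). *)
Definition circle_point t : R * R :=
  ((t ^+ 2 - 1) / (t ^+ 2 + 1), 2 * t / (t ^+ 2 + 1)).

Lemma S1_circle_point t : S1 (circle_point t).
Proof. by rewrite /S1 /=; field; exact: tan_den_neq0. Qed.

Lemma std_pairing_circle_point t t' : std_pairing (circle_point t) (circle_point t') =
  - 2 * (t - t') ^+ 2 / ((t ^+ 2 + 1) * (t' ^+ 2 + 1)).
Proof. by rewrite /std_pairing /=; field; rewrite !tan_den_neq0. Qed.

Lemma std_pairing_circle_point1 t :
  std_pairing (circle_point t) (1, 0) = - 2 / (t ^+ 2 + 1).
Proof. by rewrite /std_pairing /=; field; exact: tan_den_neq0. Qed.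

(* The stereographic coordinate of  s  seen from the pole  s1  (the cotangent
   of half the angle from  s1  to  s); [stereo_inv s1] is its inverse. *)
Definition stereo s1 s : R :=
  (s1.1 * s.2 - s1.2 * s.1) / (1 - (s1.1 * s.1 + s1.2 * s.2)).
Definition stereo_inv s1 t : R * R := rotate s1 (circle_point t).

Lemma stereo_invK s1 s : S1 s1 -> S1 s -> s != s1 -> stereo_inv s1 (stereo s1 s) = s.
Proof.
case: s1 s => a b [u v]; rewrite /S1 /stereo /stereo_inv /rotate /circle_point /=.
set x := a * u + b * v; set y := a * v - b * u => h1 h n.
have xy1 : x ^+ 2 + y ^+ 2 = 1.
  by rewrite /x /y -[1]mulr1 -{1}h1 -h; ring.
have x1 : 1 - x != 0.
  apply: contra n => /eqP E; apply/eqP.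
  have /eqP : (u - a) ^+ 2 + (v - b) ^+ 2 = 0 by rewrite /x in E; nra.
  by rewrite paddr_eq0 ?sqr_ge0 // !sqrf_eq0 !subr_eq0 => /andP[/eqP -> /eqP ->].
set t := y / (1 - x).
have tden : t ^+ 2 + 1 = 2 / (1 - x).
  rewrite /t expr_div_n (_ : y ^+ 2 = 1 - x ^+ 2); last by rewrite -xy1; ring.
  by field.
have EX : (t ^+ 2 - 1) / (t ^+ 2 + 1) = x.
  have -> : t ^+ 2 - 1 = (t ^+ 2 + 1) - 2 by ring.
  by rewrite tden; field.
have EY : 2 * t / (t ^+ 2 + 1) = y by rewrite tden /t; field.
rewrite EX EY.
by congr pair; rewrite -[RHS]mul1r -h1 /x /y; ring.
Qed.

Lemma S1_stereo_inv s1 t : S1 s1 -> S1 (stereo_inv s1 t).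
Proof. by move=> h1; apply: S1_rotate h1 (S1_circle_point t). Qed.

Lemma std_pairing_stereo_inv s1 t t' : S1 s1 ->
  std_pairing (stereo_inv s1 t) (stereo_inv s1 t') =
  - 2 * (t - t') ^+ 2 / ((t ^+ 2 + 1) * (t' ^+ 2 + 1)).
Proof. by move=> h1; rewrite std_pairing_rotate // std_pairing_circle_point. Qed.

Lemma std_pairing_stereo_inv_pole s1 t : S1 s1 ->
  std_pairing (stereo_inv s1 t) s1 = - 2 / (t ^+ 2 + 1).
Proof.
move=> h1; rewrite -{2}(rotate1 s1) std_pairing_rotate //.
exact: std_pairing_circle_point1.
Qed.

Lemma stereo_inv_neq_pole s1 t : S1 s1 -> stereo_inv s1 t != s1.
Proof.
move=> h1; apply/eqP => E; have := std_pairing_stereo_inv_pole t h1.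
rewrite E std_pairing_self // => /(congr1 (fun z => z * (t ^+ 2 + 1))).
by rewrite mul0r divfK ?tan_den_neq0 //; lra.
Qed.

Lemma stereo_inv_inj s1 : S1 s1 -> injective (stereo_inv s1).
Proof.
move=> h1 t t' E; have := std_pairing_stereo_inv t t' h1.
rewrite E std_pairing_self; last exact: S1_stereo_inv.
move=> /esym/eqP.
rewrite !mulf_eq0 invr_eq0 mulf_eq0 !(negPf (tan_den_neq0 _)) /= orbF.
by rewrite oppr_eq0 pnatr_eq0 subr_eq0 orbb => /eqP.
Qed.

Lemma stereo_inv_continuous s1 : continuous (stereo_inv s1).
Proof.
have cont_inv : continuous (fun t : R => (t ^+ 2 + 1)^-1).
  move=> t; apply: cvgV; first exact: tan_den_neq0.
  by apply: cvgD; [exact: exprn_continuous | exact: cvg_cst].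
have contX : continuous (fun t : R => (t ^+ 2 - 1) / (t ^+ 2 + 1)).
  move=> t; apply: cvgM; last exact: cont_inv.
  by apply: cvgB; [exact: exprn_continuous | exact: cvg_cst].
have contY : continuous (fun t : R => 2 * t / (t ^+ 2 + 1)).
  move=> t; apply: cvgM; last exact: cont_inv.
  by apply: cvgM; [exact: cvg_cst | exact: cvg_id].
move=> t; rewrite /continuous_at /stereo_inv /rotate /circle_point /=.
apply: (cvg_pair (F := nbhs t) (G := nbhs _) (H := nbhs _)) => /=.
  by apply: cvgB; apply: cvgM; (exact: cvg_cst || exact: contX || exact: contY).
by apply: cvgD; apply: cvgM; (exact: cvg_cst || exact: contX || exact: contY).
Qed.

Local Open Scope classical_set_scope.

Lemma stereo_inv_interval_connected s1 tk tj tl (I : interval R) : S1 s1 ->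
  tj \in I -> tl \in I -> tk \notin I ->
  connected_component (@S1 R `\` [set s1; stereo_inv s1 tk])
    (stereo_inv s1 tj) (stereo_inv s1 tl).
Proof.
move=> h1 hj hl hk.
exists (stereo_inv s1 @` [set` I]); last by exists tl.
split.
- by exists tj.
- move=> z [t tI <-]; split; first exact: S1_stereo_inv.
  move=> [E|/(stereo_inv_inj h1) Et]; first by move/eqP: (stereo_inv_neq_pole t h1).
  by move: hk; rewrite -Et tI.
- apply: connected_continuous_connected.
    by apply/connected_intervalP; exact: interval_is_interval.
  by apply: continuous_subspaceT; exact: stereo_inv_continuous.
Qed.

Lemma stereo_inv_same_side_connected s1 tk tj tl :
  S1 s1 -> 0 < (tj - tk) * (tl - tk) ->
  connected_component (@S1 R `\` [set s1; stereo_inv s1 tk])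
    (stereo_inv s1 tj) (stereo_inv s1 tl).
Proof.
move=> h1 h.
have [jk|jk] := ltP tk tj.
  apply: (@stereo_inv_interval_connected s1 tk tj tl (`]tk, +oo[)%R);
    rewrite ?in_itv /= ?andbT ?ltxx //.
  by rewrite ltNge; apply/negP => lk; nra.
apply: (@stereo_inv_interval_connected s1 tk tj tl (`]-oo, tk[)%R);
  rewrite ?in_itv /= ?ltxx //.
  have : tj != tk by apply/eqP => e; rewrite e subrr mul0r in h; lra.
  by rewrite lt_neqAle jk andbT.
by rewrite ltNge; apply/negP => lk; nra.
Qed.

End StandardRcircle.

Section RealCrossRatio.
Variable R : realFieldType.
Implicit Types u v w : R.

Lemma between_distD u v w : (u - v) * (w - v) < 0 -> `|w - u| = `|w - v| + `|v - u|.
Proof.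
move=> h; have [uv|uv] := ltP u v.
  have wv : v < w by nra.
  by rewrite !gtr0_norm ?subr_gt0 //; [ring | lra].
have vu : v < u.
  by rewrite lt_neqAle uv andbT; apply: contraTneq h => ->; rewrite subrr mul0r ltxx.
have wv : w < v by nra.
by rewrite !ltr0_norm ?subr_lt0 //; [ring | lra].
Qed.

Lemma between3 u v w : u != v -> u != w -> v != w ->
  [\/ (u - v) * (w - v) < 0, (v - u) * (w - u) < 0 | (u - w) * (v - w) < 0].
Proof.
move=> nuv nuw nvw.
have [a|a] := ltP ((u - v) * (w - v)) 0; first by constructor 1.
have [b|b] := ltP ((v - u) * (w - u)) 0; first by constructor 2.
have [c|c] := ltP ((u - w) * (v - w)) 0; first by constructor 3.
have sq_gt0 (r r' : R) : r != r' -> 0 < (r - r') ^+ 2.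
  by move=> ne; rewrite exprn_even_gt0 // subr_eq0.
have : 0 < (u - v) ^+ 2 * (u - w) ^+ 2 * (v - w) ^+ 2.
  by apply: mulr_gt0; [apply: mulr_gt0|]; apply: sq_gt0.
have : 0 <= ((u - v) * (w - v)) * ((v - u) * (w - u)) * ((u - w) * (v - w)).
  by apply: mulr_ge0; [apply: mulr_ge0|].
by rewrite [X in 0 <= X](_ : _ = - ((u - v) ^+ 2 * (u - w) ^+ 2 * (v - w) ^+ 2));
  [lra | ring].
Qed.

Lemma real_cross_ratio_relations (t2 t3 t4 : R) : t2 != t3 ->
  let x := `|(t4 - t2) / (t3 - t2)| in let y := `|(t4 - t3) / (t2 - t3)| in
  [/\ (t2 - t3) * (t4 - t3) < 0 -> x - y = 1,
      (t3 - t2) * (t4 - t2) < 0 -> y - x = 1 &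
      (t2 - t4) * (t3 - t4) < 0 -> x + y = 1].
Proof.
move=> n23 x y.
have N32 : `|t3 - t2| != 0 by rewrite normr_eq0 subr_eq0 eq_sym.
rewrite /x /y !normrM !normfV (distrC t2 t3).
split => /between_distD E.
- by rewrite E; field.
- by rewrite E (distrC t2 t3); field.
- by rewrite -mulrDl (distrC t4 t3) [X in X / _]addrC -E mulfV.
Qed.

End RealCrossRatio.

Lemma std_pairing_cross_ratio (R : realType) (s1 : R * R) (t2 t3 t4 : R) :
  S1 s1 -> t3 != t2 ->
  std_pairing (stereo_inv s1 t3) s1 * std_pairing (stereo_inv s1 t4) (stereo_inv s1 t2)
  / (std_pairing (stereo_inv s1 t4) s1 * std_pairing (stereo_inv s1 t3) (stereo_inv s1 t2))
  = ((t4 - t2) / (t3 - t2)) ^+ 2.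
Proof.
move=> h1 t32; rewrite !std_pairing_stereo_inv_pole // !std_pairing_stereo_inv //.
by field; rewrite subr_eq0 t32 !tan_den_neq0.
Qed.

Lemma separates_stereo (R : realType) (s1 sk sj sl : R * R) :
  S1 s1 -> S1 sk -> S1 sj -> S1 sl -> sk != s1 -> sj != s1 -> sl != s1 ->
  0 < (stereo s1 sj - stereo s1 sk) * (stereo s1 sl - stereo s1 sk) ->
  ~ separates s1 sk sj sl.
Proof.
move=> h1 hk hj hl nk nj nl pos; apply.
by have := stereo_inv_same_side_connected h1 pos; rewrite !stereo_invK.
Qed.

Section CrossRatioInvariance.
Variable R : realType.
Local Notation C := R[i].
Local Notation V := 'cV[R[i]]_3.

Lemma KRX_scale (l1 l2 l3 l4 : C) (q1 q2 q3 q4 : V) :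
  l1 != 0 -> l2 != 0 -> l3 != 0 -> l4 != 0 ->
  KRX (l1 *: q1) (l2 *: q2) (l3 *: q3) (l4 *: q4) = KRX q1 q2 q3 q4.
Proof.
move=> n1 n2 n3 n4; rewrite /KRX !(hformZl, hformZr).
set F := l3 * l1^* * (l4 * l2^*).
have F0 : F != 0 by rewrite !mulf_neq0 // conjC_eq0.
transitivity (F * (hform q3 q1 * hform q4 q2) / (F * (hform q4 q1 * hform q3 q2))).
  by congr (_ / _); rewrite /F; ring.
by rewrite invfM mulrACA mulfV // mul1r.
Qed.

Lemma KRX_U21 (g : 'M[C]_3) (q1 q2 q3 q4 : V) : isU21 g ->
  KRX (g *m q1) (g *m q2) (g *m q3) (g *m q4) = KRX q1 q2 q3 q4.
Proof. by move=> gU; rewrite /KRX !gU. Qed.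

Lemma KRX_std_param (s1 s2 s3 s4 : R * R) :
  KRX (std_param s1) (std_param s2) (std_param s3) (std_param s4) =
  rC (std_pairing s3 s1 * std_pairing s4 s2 / (std_pairing s4 s1 * std_pairing s3 s2)).
Proof. by rewrite /KRX !hform_std_param !rCM rCV rCM. Qed.

Lemma cmod_KRX (q1 q2 q3 q4 : V) : cmod (KRX q1 q2 q3 q4) =
  cmod (hform q1 q3) * cmod (hform q2 q4) / (cmod (hform q1 q4) * cmod (hform q2 q3)).
Proof.
rewrite /KRX cmodM cmodV !cmodM (cmod_hformC q1 q3) (cmod_hformC q2 q4).
by rewrite (cmod_hformC q1 q4) (cmod_hformC q2 q3).
Qed.

End CrossRatioInvariance.

Section RcircleQuadruple.
Variable R : realType.
Local Notation V := 'cV[R[i]]_3.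

Variables (p1 p2 p3 p4 : V) (g : 'M[R[i]]_3) (s1 s2 s3 s4 : R * R).
Hypotheses (b1 : boundary_lift p1) (b2 : boundary_lift p2)
  (b3 : boundary_lift p3) (b4 : boundary_lift p4).
Hypotheses (d12 : ~ same_point p1 p2) (d13 : ~ same_point p1 p3)
  (d14 : ~ same_point p1 p4) (d23 : ~ same_point p2 p3)
  (d24 : ~ same_point p2 p4) (d34 : ~ same_point p3 p4).
Hypotheses (gU : isU21 g) (h1 : S1 s1) (h2 : S1 s2) (h3 : S1 s3) (h4 : S1 s4).
Hypotheses (e1 : same_point p1 (g *m std_param s1))
  (e2 : same_point p2 (g *m std_param s2))
  (e3 : same_point p3 (g *m std_param s3))
  (e4 : same_point p4 (g *m std_param s4)).

Local Notation t s := (stereo s1 s).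

Lemma same_point_std_param_neq (p q : V) (s s' : R * R) : boundary_lift q ->
  same_point p (g *m std_param s) -> same_point q (g *m std_param s') ->
  ~ same_point p q -> s != s'.
Proof.
move=> [qn0 _] [l ->] [m eq] npq; apply/eqP => ss'; apply: npq.
have m0 : m != 0 by apply: contraNneq qn0 => m0; rewrite eq m0 scale0r.
by exists (l / m); rewrite eq ss' scalerA divfK.
Qed.

Lemma same_point_scale (p q : V) : boundary_lift p -> same_point p q ->
  exists2 l, l != 0 & p = l *: q.
Proof.
move=> [pn0 _] [l pq]; exists l => //.
by apply: contraNneq pn0 => l0; rewrite pq l0 scale0r.
Qed.

Let n21 : s2 != s1.
Proof. by rewrite eq_sym; apply: same_point_std_param_neq b2 e1 e2 d12. Qed.
Let n31 : s3 != s1.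
Proof. by rewrite eq_sym; apply: same_point_std_param_neq b3 e1 e3 d13. Qed.
Let n41 : s4 != s1.
Proof. by rewrite eq_sym; apply: same_point_std_param_neq b4 e1 e4 d14. Qed.

Lemma stereo_neq (s s' : R * R) : S1 s -> S1 s' -> s != s1 -> s' != s1 ->
  s != s' -> t s != t s'.
Proof.
move=> hs hs' ns ns'; apply: contra => /eqP E.
by rewrite -(stereo_invK h1 hs ns) -(stereo_invK h1 hs' ns') E.
Qed.

Lemma Rcircle_stereo_neq : [/\ t s2 != t s3, t s2 != t s4 & t s3 != t s4].
Proof.
split; apply: stereo_neq => //.
- exact: same_point_std_param_neq b3 e2 e3 d23.
- exact: same_point_std_param_neq b4 e2 e4 d24.
- exact: same_point_std_param_neq b4 e3 e4 d34.
Qed.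

Lemma Rcircle_KRX_stereo (q2 q3 q4 : V) (k2 k3 k4 : R * R) :
  boundary_lift q2 -> boundary_lift q3 -> boundary_lift q4 ->
  S1 k2 -> S1 k3 -> S1 k4 -> k2 != s1 -> k3 != s1 -> k4 != s1 -> k3 != k2 ->
  same_point q2 (g *m std_param k2) -> same_point q3 (g *m std_param k3) ->
  same_point q4 (g *m std_param k4) ->
  KRX p1 q2 q3 q4 = rC (((t k4 - t k2) / (t k3 - t k2)) ^+ 2).
Proof.
move=> c2 c3 c4 hk2 hk3 hk4 nk2 nk3 nk4 nk32 f2 f3 f4.
have [l1 l10 ->] := same_point_scale b1 e1.
have [l2 l20 ->] := same_point_scale c2 f2.
have [l3 l30 ->] := same_point_scale c3 f3.
have [l4 l40 ->] := same_point_scale c4 f4.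
rewrite KRX_scale // KRX_U21 // KRX_std_param.
have t32 : t k3 != t k2 by apply: stereo_neq.
by have := std_pairing_cross_ratio (t k4) h1 t32; rewrite !stereo_invK // => ->.
Qed.

Lemma Rcircle_KRX :
  KRX p1 p2 p3 p4 = rC (((t s4 - t s2) / (t s3 - t s2)) ^+ 2) /\
  KRX p1 p3 p2 p4 = rC (((t s4 - t s3) / (t s2 - t s3)) ^+ 2).
Proof.
have n32 : s3 != s2 by rewrite eq_sym; apply: same_point_std_param_neq b3 e2 e3 d23.
by split; apply: Rcircle_KRX_stereo; rewrite // eq_sym.
Qed.

Lemma Rcircle_not_separates :
  [/\ 0 < (t s2 - t s3) * (t s4 - t s3) -> ~ separates s1 s3 s2 s4,
      0 < (t s3 - t s2) * (t s4 - t s2) -> ~ separates s1 s2 s3 s4 &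
      0 < (t s2 - t s4) * (t s3 - t s4) -> ~ separates s1 s4 s2 s3].
Proof. by split; apply: separates_stereo. Qed.

Lemma Rcircle_sqrt_KRX :
  let x := sqrtC (KRX p1 p2 p3 p4) in let y := sqrtC (KRX p1 p3 p2 p4) in
  [/\ 0 < KRX p1 p2 p3 p4, 0 < KRX p1 p3 p2 p4,
      x + y = 1 \/ x - y = -1 \/ x - y = 1 &
      [/\ separates s1 s3 s2 s4 -> x - y = 1, separates s1 s2 s3 s4 -> y - x = 1 &
          separates s1 s4 s2 s3 -> x + y = 1]].
Proof.
have [t23 t24 t34] := Rcircle_stereo_neq.
have [-> ->] := Rcircle_KRX; rewrite !sqrtC_rC_sqr.
have [r1 r2 r3] := real_cross_ratio_relations (t s4) t23.
have [ns1 ns2 ns3] := Rcircle_not_separates.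
have ratio_gt0 (a b c : R) : a != c -> b != c -> 0 < rC (((a - c) / (b - c)) ^+ 2).
  move=> ac bc; rewrite -rC0 rC_lt exprn_even_gt0 //.
  by rewrite mulf_neq0 ?invr_eq0 // subr_eq0.
have lt0 (a b c : R) : a != c -> b != c -> ~ 0 < (a - c) * (b - c) ->
    (a - c) * (b - c) < 0.
  by move=> ac bc npos; rewrite lt_neqAle mulf_neq0 ?subr_eq0 //= leNgt; apply/negP.
split.
- by apply: ratio_gt0; rewrite // eq_sym.
- by apply: ratio_gt0; rewrite // eq_sym.
- case: (between3 t23 t24 t34) => h.
  + by right; right; rewrite -rCB r1 ?rC1.
  + by right; left; rewrite -rCB -opprB r2 ?rCN ?rC1.
  + by left; rewrite -rCD r3 ?rC1.
- split => sep.
  + rewrite -rCB r1 ?rC1 //.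
    by apply: lt0; [exact: t23 | rewrite eq_sym | move/ns1].
  + rewrite -rCB r2 ?rC1 //.
    by apply: lt0; [rewrite eq_sym | rewrite eq_sym | move/ns2].
  + rewrite -rCD r3 ?rC1 //.
    by apply: lt0; [exact: t24 | exact: t34 | move/ns3].
Qed.

End RcircleQuadruple.

Section RcircleParametrization.
Variable R : realType.
Local Notation C := R[i].
Local Notation V := 'cV[R[i]]_3.

(* A real null vector  (x0, x1, x2)  is proportional to  std_param s  with
   s = (mu x0 - 1, mu x1)  and  mu = 2 / (x0 - 2 x2). *)
Lemma std_Rcircle_lift_param (x : V) : std_Rcircle_lift x ->
  exists (s : R * R) (l : C), S1 s /\ x = l *: std_param s.
Proof.
move=> [[xr ->] [xn xx]].
set x0 := xr 0 0; set x1 := xr 1%:R 0; set x2 := xr 2%:R 0.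
have hx : x0 * x2 + x1 * x1 + x2 * x0 = 0.
  by apply: rC_inj; rewrite rC0 -xx /hform !mxE !rC_conj -!rCM -!rCD.
have dn : x0 - 2 * x2 != 0.
  apply/eqP => d; case/eqP: xn.
  have e2 : x2 = 0 by nra.
  have e1 : x1 = 0 by nra.
  have e0 : x0 = 0 by lra.
  by apply: col3P; rewrite !mxE -/x0 -/x1 -/x2 ?e0 ?e1 ?e2 rC0.
pose mu := 2 / (x0 - 2 * x2).
have mud : mu * (x0 - 2 * x2) = 2 by rewrite /mu divfK.
have mun : rC mu != 0.
  by rewrite rC_eq0; apply/eqP => mu0; move: mud; rewrite mu0 mul0r => /eqP;
    rewrite eq_sym pnatr_eq0.
exists (mu * x0 - 1, mu * x1), (rC mu)^-1; split.
  rewrite /S1 /=.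
  have -> : (mu * x0 - 1) ^+ 2 + (mu * x1) ^+ 2 = mu * x0 * (mu * (x0 - 2 * x2) - 2)
      + mu ^+ 2 * (x0 * x2 + x1 * x1 + x2 * x0) + 1 by ring.
  by rewrite mud hx; ring.
apply: (@scalerI _ _ (rC mu)) => //; rewrite scalerA mulfV // scale1r.
apply: col3P; rewrite !mxE /= -/x0 -/x1 -/x2 -rCM; congr rC; try ring.
have -> : mu * x2 = (mu * x0 - mu * (x0 - 2 * x2)) / 2 by field.
by rewrite mud; field.
Qed.

Lemma on_common_Rcircle_param (p1 p2 p3 p4 : V) : on_common_Rcircle p1 p2 p3 p4 ->
  exists (g : 'M[C]_3) (s1 s2 s3 s4 : R * R),
  [/\ isU21 g, [/\ S1 s1, S1 s2, S1 s3 & S1 s4] &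
      [/\ same_point p1 (g *m std_param s1), same_point p2 (g *m std_param s2),
          same_point p3 (g *m std_param s3) & same_point p4 (g *m std_param s4)]].
Proof.
move=> [g [gU onC]].
have param p : p \in [:: p1; p2; p3; p4] ->
    exists s, S1 s /\ same_point p (g *m std_param s).
  move=> /onC [x [/std_Rcircle_lift_param [s [m [hs ->]]] [l ->]]].
  by exists s; split => //; exists (l * m); rewrite -scalemxAr scalerA.
pose ps := [:: p1; p2; p3; p4].
have [m1 m2 m3 m4] : [/\ p1 \in ps, p2 \in ps, p3 \in ps & p4 \in ps].
  by rewrite !inE !eqxx !orbT.
have [s1 [h1 e1]] := param p1 m1; have [s2 [h2 e2]] := param p2 m2.
have [s3 [h3 e3]] := param p3 m3; have [s4 [h4 e4]] := param p4 m4.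
by exists g, s1, s2, s3, s4.
Qed.

End RcircleParametrization.

Lemma KRX_sqrt_ptolemy (R : realType) (p1 p2 p3 p4 : 'cV[R[i]]_3) :
  boundary_lift p1 -> boundary_lift p2 -> boundary_lift p3 -> boundary_lift p4 ->
  ~ same_point p1 p2 -> ~ same_point p1 p3 -> ~ same_point p1 p4 ->
  ~ same_point p2 p3 -> ~ same_point p2 p4 -> ~ same_point p3 p4 ->
  let x := sqrtC `|KRX p1 p2 p3 p4| in let y := sqrtC `|KRX p1 p3 p2 p4| in
  [/\ 1 <= x + y, -1 <= x - y <= 1 &
      (x + y = 1 \/ x - y = -1 \/ x - y = 1) -> on_common_Rcircle p1 p2 p3 p4].
Proof.
move=> b1 b2 b3 b4 d12 d13 d14 d23 d24 d34 x y.
have n12 := hform_distinct_neq0 b1 b2 d12; have n13 := hform_distinct_neq0 b1 b3 d13.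
have n14 := hform_distinct_neq0 b1 b4 d14; have n23 := hform_distinct_neq0 b2 b3 d23.
have n24 := hform_distinct_neq0 b2 b4 d24; have n34 := hform_distinct_neq0 b3 b4 d34.
case: b1 b2 b3 b4 => [_ h1] [_ h2] [_ h3] [_ h4].
set A := cmod (hform p1 p2) * cmod (hform p3 p4).
set B := cmod (hform p1 p3) * cmod (hform p2 p4).
set D := cmod (hform p1 p4) * cmod (hform p2 p3).
have D0 : 0 < D by rewrite mulr_gt0 ?cmod_gt0.
have sqrt_ratioK (P : R) : 0 <= P -> P = Num.sqrt (P / D) ^+ 2 * D.
  move=> P0; rewrite sqr_sqrtr ?divr_ge0 ?(ltW D0) //; field; exact: lt0r_neq0.
have ex : x = rC (Num.sqrt (B / D)).
  by rewrite /x normr_cmod sqrtC_rC ?cmod_ge0 // cmod_KRX.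
have ey : y = rC (Num.sqrt (A / D)).
  by rewrite /y normr_cmod sqrtC_rC ?cmod_ge0 // cmod_KRX (cmod_hformC p2 p3).
have [le_sum le_diff eq_iff] := ptolemy_sqrt_bounds D0 (sqrtr_ge0 _) (sqrtr_ge0 _)
  (sqrt_ratioK _ (mulr_ge0 (cmod_ge0 _) (cmod_ge0 _)))
  (sqrt_ratioK _ (mulr_ge0 (cmod_ge0 _) (cmod_ge0 _))) (ptolemy_inequality h1 h2 h3 h4).
rewrite ex ey; split.
- by rewrite -rCD -rC1 rC_le.
- by rewrite -rCB -rC1 -rCN !rC_le.
- move=> eqs.
  have ptolemy_eq : A ^+ 2 + B ^+ 2 + D ^+ 2 = 2 * (A * B + B * D + D * A).
    apply/eq_iff; case: eqs => [e|[e|e]]; [left|right; left|right; right];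
      by apply: rC_inj; rewrite ?rCD ?rCB ?rCN ?rC1.
  have [e1 e2 e3] := ptolemy_equality_real h1 h2 h3 h4 ptolemy_eq.
  exact: null_quadruple_on_Rcircle h1 h2 h3 h4 n12 n13 n14 n23 n24 n34 e1 e2 e3.
Qed.

Theorem theorem3p1 (R : realType) (p1 p2 p3 p4 : 'cV[R[i]]_3) :
  boundary_lift p1 -> boundary_lift p2 -> boundary_lift p3 -> boundary_lift p4 ->
  ~ same_point p1 p2 -> ~ same_point p1 p3 -> ~ same_point p1 p4 ->
  ~ same_point p2 p3 -> ~ same_point p2 p4 -> ~ same_point p3 p4 ->
  let X1 := KRX p1 p2 p3 p4 in
  let X2 := KRX p1 p3 p2 p4 in
  [/\ 1 <= sqrtC `|X1| + sqrtC `|X2|,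
      -1 <= sqrtC `|X1| - sqrtC `|X2| <= 1,
      (sqrtC `|X1| + sqrtC `|X2| = 1 \/ sqrtC `|X1| - sqrtC `|X2| = -1
         \/ sqrtC `|X1| - sqrtC `|X2| = 1) <-> on_common_Rcircle p1 p2 p3 p4
    & on_common_Rcircle p1 p2 p3 p4 ->
      [/\ 0 < X1, 0 < X2 &
        forall (g : 'M[R[i]]_3) (s1 s2 s3 s4 : R * R),
          isU21 g -> S1 s1 -> S1 s2 -> S1 s3 -> S1 s4 ->
          same_point p1 (g *m std_param s1) -> same_point p2 (g *m std_param s2) ->
          same_point p3 (g *m std_param s3) -> same_point p4 (g *m std_param s4) ->
          [/\ separates s1 s3 s2 s4 -> sqrtC X1 - sqrtC X2 = 1,
              separates s1 s2 s3 s4 -> sqrtC X2 - sqrtC X1 = 1 &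
              separates s1 s4 s2 s3 -> sqrtC X1 + sqrtC X2 = 1]]].
Proof.
move=> b1 b2 b3 b4 d12 d13 d14 d23 d24 d34 X1 X2.
have [le_sum le_diff circle_of_eq] :=
  KRX_sqrt_ptolemy b1 b2 b3 b4 d12 d13 d14 d23 d24 d34.
have on_circle := Rcircle_sqrt_KRX b1 b2 b3 b4 d12 d13 d14 d23 d24 d34.
split => //.
  split=> // /on_common_Rcircle_param [g [s1 [s2 [s3 [s4 [gU [h1 h2 h3 h4] [e1 e2 e3 e4]]]]]]].
  have [X1_gt0 X2_gt0 rel _] := on_circle _ _ _ _ _ gU h1 h2 h3 h4 e1 e2 e3 e4.
  by rewrite !gtr0_norm.
move=> /on_common_Rcircle_param [g [s1 [s2 [s3 [s4 [gU [h1 h2 h3 h4] [e1 e2 e3 e4]]]]]]].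
have [X1_gt0 X2_gt0 _ _] := on_circle _ _ _ _ _ gU h1 h2 h3 h4 e1 e2 e3 e4.
split=> // g' s1' s2' s3' s4' gU' h1' h2' h3' h4' e1' e2' e3' e4'.
by have [_ _ _] := on_circle _ _ _ _ _ gU' h1' h2' h3' h4' e1' e2' e3' e4'.
Qed.
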